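(* Let $\mathcal M=(G,In,Out,Leak)$ be a linear compartmental model with $In=Out=\{1\}$. Then for every positive integer $j$, $$\sum_{F^*\in\mathcal F_j^{1,1}(\widetilde G^*_1)}\pi_{F^*}=\sum_{F\in\mathcal F_j(\widetilde G_1)}\pi_F.$$
   Context: A linear compartmental model $\mathcal M=(G,In,Out,Leak)$ consists of a finite directed graph $G=(V_G,E_G)$ without multi-edges, compartments $V_G=\{1,\dots,n\}$, and subsets $In,Out,Leak\subseteq V_G$; edge $q\to p$ has label $a_{pq}$. The leak-augmented graph $\widetilde G$ is obtained from $G$ by adding a node $0$ and, for each $p\in Leak$, an edge $p\to0$ labeled $a_{0p}$. $\widetilde G^*_1$ is obtained from $\widetilde G$ by removing all edges outgoing from node $1$. $\widetilde G_1$ is obtained from $\widetilde G^*_1$ by replacing every edge $p\to1$ (label $a_{1p}$) by an edge $p\to0$ with the same label $a_{1p}$ (multi-edges are allowed, i.e. this edge is kept separate from any leak edge $p\to0$), and then deleting node $1$. A spanning incoming forest of a graph is a spanning subgraph whose underlying undirected graph has no cycles and in which each node has at most one outgoing edge. $\mathcal F_j(H)$ is the set of spanning incoming forests of $H$ with exactly $j$ edges, and $\mathcal F_j^{k,\ell}(H)$ those in which some connected component contains both $k$ and $\ell$. $\pi_F$ is the product of the edge labels of $F$ ($1$ if no edges). *)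

From HB Require Import structures.
From mathcomp Require Import all_boot all_order all_algebra.
Set Implicit Arguments. Unset Strict Implicit. Unset Printing Implicit Defensive.
Import GRing.Theory.
Local Open Scope ring_scope.

(* A finite directed multigraph on vertex type V with edges 'I_ne carrying
   labels in R (multi-edges allowed: distinct edge indices are distinct edges). *)
Record mgraph (V : finType) (R : Type) := MGraph {
  ne : nat;
  esrc : 'I_ne -> V;
  etgt : 'I_ne -> V;
  elab : 'I_ne -> R }.

Definition mgraph_of_seq (V : finType) (R : Type) (s : seq (V * V * R)) : mgraph V R :=
  @MGraph V R (size s)
    (fun i => (tnth (in_tuple s) i).1.1)
    (fun i => (tnth (in_tuple s) i).1.2)
    (fun i => (tnth (in_tuple s) i).2).

Section Forests.
Variables (V : finType) (R : Type) (H : mgraph V R).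

Definition uadj (F : {set 'I_(ne H)}) : rel V := fun u v =>
  [exists e in F, ((esrc e == u) && (etgt e == v)) || ((esrc e == v) && (etgt e == u))].

(* underlying undirected graph of F has no cycle: every edge of F is a bridge,
   i.e. its endpoints are disconnected once it is removed (this also excludes
   self-loops and pairs of parallel edges) *)
Definition uacyclic (F : {set 'I_(ne H)}) : bool :=
  [forall e in F, ~~ connect (uadj (F :\ e)) (esrc e) (etgt e)].

Definition is_inforest (F : {set 'I_(ne H)}) : bool :=
  uacyclic F && [forall v : V, #|[set e in F | esrc e == v]| <= 1]%N.

Definition same_comp (F : {set 'I_(ne H)}) (k l : V) : bool := connect (uadj F) k l.

End Forests.

Definition forest_sum (V : finType) (R : comPzRingType) (H : mgraph V R) (j : nat) : R :=
  \sum_(F : {set 'I_(ne H)} | is_inforest F && (#|F| == j)) \prod_(e in F) elab e.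

Definition forest_sum_kl (V : finType) (R : comPzRingType) (H : mgraph V R) (j : nat)
  (k l : V) : R :=
  \sum_(F : {set 'I_(ne H)} | [&& is_inforest F, #|F| == j & same_comp F k l])
     \prod_(e in F) elab e.

(* Compartmental models with n.+1 compartments: compartment i+1 is the ordinal i
   (so compartment 1 is ord0).  Vertices of the leak-augmented graph are
   option 'I_n.+1, with None = node 0.  The edge set E contains (q, p) for an
   edge q -> p, labelled a (Some p) q = a_{pq}; the leak label a_{0p} is
   a None p. *)
Section Model.
Variables (R : comPzRingType) (n : nat) (E : {set 'I_n.+1 * 'I_n.+1})
  (Leak : {set 'I_n.+1}) (a : option 'I_n.+1 -> 'I_n.+1 -> R).

Definition Gt_edges : seq (option 'I_n.+1 * option 'I_n.+1 * R) :=
  [seq (Some qp.1, Some qp.2, a (Some qp.2) qp.1) | qp <- enum E] ++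
  [seq (Some p, None, a None p) | p <- enum Leak].

Definition Gtilde : mgraph (option 'I_n.+1) R := mgraph_of_seq Gt_edges.

Definition Gstar1_edges := [seq e <- Gt_edges | e.1.1 != Some ord0].
Definition Gtilde_star1 : mgraph (option 'I_n.+1) R := mgraph_of_seq Gstar1_edges.

(* \widetilde G_1 : node 1 deleted; vertex type option 'I_n where None = node 0
   and Some i = compartment i+2.  The vertex map sends node 1 to node 0, so every
   edge p -> 1 (label a_{1p}) becomes a separate edge p -> 0 with the same label. *)
Definition del1 (x : option 'I_n.+1) : option 'I_n :=
  if x is Some v then unlift ord0 v else None.

Definition Gtilde1 : mgraph (option 'I_n) R :=
  mgraph_of_seq [seq (del1 e.1.1, del1 e.1.2, e.2) | e <- Gstar1_edges].

End Model.

From mathcomp Require Import all_boot all_order all_algebra.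
Set Implicit Arguments. Unset Strict Implicit. Unset Printing Implicit Defensive.

(* Proof idea: in G~*_1 the nodes 0 and 1 have no outgoing edges, and a
   connected component of an incoming forest contains at most one such sink
   (a simple path between two sinks must somewhere change direction, at a
   vertex with two out-edges).  So no forest of G~*_1 joins 0 and 1, and
   identifying these two nodes, which is how G~_1 arises, maps its forests
   bijectively onto the forests of G~_1 with the same edges and labels.
   The condition that 1 be in the component of 1 is vacuous. *)

Lemma imsetD1 (aT rT : finType) (f : aT -> rT) (A : {set aT}) x :
  injective f -> f @: (A :\ x) = f @: A :\ f x.
Proof.
move=> f_inj; apply/setP => y.
apply/imsetP/setD1P => [[z /setD1P[zx zA] ->]|[yfx /imsetP[z zA yE]]].
  by rewrite (inj_eq f_inj) zx imset_f.
exists z => //; rewrite !inE zA andbT.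
by apply: contraNneq yfx => zx; rewrite yE zx.
Qed.

Section InForests.
Variables (V : finType) (R : Type) (H : mgraph V R).
Implicit Types (F : {set 'I_(ne H)}) (e : 'I_(ne H)) (u v x y : V).

Lemma uadjP F u v : reflect (exists2 e, e \in F &
    (esrc e = u /\ etgt e = v) \/ (esrc e = v /\ etgt e = u)) (uadj F u v).
Proof.
apply: (iffP existsP) => [[e /andP[eF]]|[e eF]].
  by case/orP=> /andP[/eqP<- /eqP<-]; exists e; tauto.
by case=> -[<- <-]; exists e; rewrite eF !eqxx ?orbT.
Qed.

Lemma uadj_sym F : symmetric (uadj F).
Proof. by move=> u v; apply/uadjP/uadjP => -[e eF h]; exists e; tauto. Qed.

Lemma connect_uadj_sym F : connect_sym (uadj F).
Proof. exact/sym_connect_sym/uadj_sym. Qed.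

Lemma connect_uadj_subset F F' u v :
  F \subset F' -> connect (uadj F) u v -> connect (uadj F') u v.
Proof.
move=> sFF'; apply: connect_sub => {}u {}v /uadjP[e eF h]; apply/connect1/uadjP.
by exists e; first exact: (subsetP sFF').
Qed.

Lemma outdeg_le1P F :
  reflect {in F &, injective (@esrc _ _ H)}
          [forall v, #|[set e in F | esrc e == v]| <= 1]%N.
Proof.
apply: (iffP forallP) => [le1 e e' eF e'F srcE|inj v].
  by apply: (card_le1_eqP (le1 (esrc e))); rewrite inE ?eF ?e'F srcE /=.
apply/card_le1_eqP => e e'; rewrite !inE => /andP[eF /eqP<-] /andP[e'F /eqP srcE].
exact: inj.
Qed.

Section OutdegLe1.
Variable F : {set 'I_(ne H)}.
Hypothesis outdeg_le1 : {in F &, injective (@esrc _ _ H)}.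

(* Once a simple path has stepped against an edge, every later step must too:
   the only out-edge of the current vertex leads back to its predecessor. *)
Lemma path_against_edge_last_out p e : e \in F ->
  path (uadj F) (esrc e) p -> uniq (etgt e :: esrc e :: p) ->
  exists2 e', e' \in F & esrc e' = last (esrc e) p.
Proof.
elim: p e => [|w p IHp] e eF /=; first by exists e.
case/andP=> /uadjP[e' e'F [[srcE tgtE]|[srcE tgtE]]] pth.
  have ee' : e = e' by apply: outdeg_le1; rewrite ?srcE.
  by rewrite -tgtE -ee' !inE eqxx orbT.
by case/andP=> _; move: pth; rewrite -srcE -tgtE; exact: IHp.
Qed.

Lemma connect_sinks_eq x y :
  {in F, forall e, esrc e != x} -> {in F, forall e, esrc e != y} ->
  connect (uadj F) x y -> x = y.
Proof.
move=> sink_x sink_y /connectP[p pth yE]; move: sink_y; rewrite {y}yE.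
case: (shortenP pth) => -[|v p'] //= /andP[/uadjP[e eF edge] pth'] uniqp _ sink_y.
case: edge => -[srcE tgtE]; first by have := sink_x e eF; rewrite srcE eqxx.
subst v x.
have [e' e'F srce'] := path_against_edge_last_out eF pth' uniqp.
by have := sink_y e' e'F; rewrite srce' eqxx.
Qed.

End OutdegLe1.
End InForests.

Section MergeSinks.
Variables (V W : finType) (R : Type) (H : mgraph V R) (H' : mgraph W R).
Variables (c : 'I_(ne H) -> 'I_(ne H')) (g : V -> W) (X : {set V}).
Hypothesis c_inj : injective c.
Hypothesis esrc_c : forall e, esrc (c e) = g (esrc e).
Hypothesis etgt_c : forall e, etgt (c e) = g (etgt e).
Hypothesis g_merges_X : forall u v, g u = g v -> u = v \/ (u \in X) && (v \in X).
Hypothesis esrc_notin : forall e : 'I_(ne H), esrc e \notin X.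
Implicit Types (F : {set 'I_(ne H)}) (u v : V).

Lemma connect_imset F u v :
  connect (uadj F) u v -> connect (uadj (c @: F)) (g u) (g v).
Proof.
move=> /connectP[p pth ->] {v}; elim: p u pth => [|w p IHp] u /=.
  by rewrite connect0.
case/andP=> /uadjP[e eF edge] /IHp; apply: connect_trans; apply/connect1/uadjP.
exists (c e); first exact: imset_f.
by rewrite esrc_c etgt_c; case: edge => -[-> ->]; tauto.
Qed.

Definition reaches F v := [exists x in X, connect (uadj F) v x].

(* [u] and [v] are connected in [F] once the vertices of [X] are identified. *)
Definition linked F u v := connect (uadj F) u v || reaches F u && reaches F v.

Lemma linked_uadj F u a b : linked F u a -> uadj F a b -> linked F u b.
Proof.
move=> + ab; rewrite /linked => /orP[ua|/andP[-> /exists_inP[x xX ax]]].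
  by rewrite (connect_trans ua (connect1 ab)).
apply/orP; right; apply/exists_inP; exists x => //.
by apply: connect_trans ax; apply: connect1; rewrite uadj_sym.
Qed.

Lemma linked_merge F u a b : linked F u a -> g a = g b -> linked F u b.
Proof.
move=> lua /g_merges_X[<- //|/andP[aX bX]].
have reachesX w : w \in X -> reaches F w.
  by move=> wX; apply/exists_inP; exists w; rewrite ?connect0.
apply/orP; right; rewrite (reachesX b bX) andbT.
by case/orP: lua => [ua|/andP[]//]; apply/exists_inP; exists a.
Qed.

Lemma connect_imset_linked F u v :
  connect (uadj (c @: F)) (g u) (g v) -> linked F u v.
Proof.
have linked_u a : g a = g u -> linked F u a.
  by move/esym/linked_merge; apply; rewrite /linked connect0.
case/connectP=> p; elim: p (g u) linked_u => [|w' p IHp] w lifted /=.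
  by move=> _ /lifted.
case/andP=> /uadjP[_ /imsetP[e eF ->] edge] pth; apply: IHp pth => b gb.
rewrite esrc_c etgt_c in edge; case: edge => -[srcE tgtE].
- apply: linked_merge (etrans tgtE (esym gb)); apply: linked_uadj (lifted _ srcE) _.
  by apply/uadjP; exists e => //; left.
- apply: linked_merge (etrans srcE (esym gb)); apply: linked_uadj (lifted _ tgtE) _.
  by apply/uadjP; exists e => //; right.
Qed.

Lemma outdeg_le1_imset F :
  {in c @: F &, injective (@esrc _ _ H')} <-> {in F &, injective (@esrc _ _ H)}.
Proof.
split=> inj e e' eF e'F.
  by move=> srcE; apply: c_inj; apply: inj; rewrite ?imset_f // !esrc_c srcE.
case/imsetP: eF e'F => {}e eF -> /imsetP[{}e' e'F ->].
rewrite !esrc_c => /g_merges_X[srcE|/andP[eX _]]; first by rewrite (inj e e').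
by have := esrc_notin e; rewrite eX.
Qed.

(* Two vertices of [X] are sinks, so no forest joins them; hence an edge [e]
   whose endpoints both reach [X] in [F :\ e] would close a cycle. *)
Lemma uacyclic_imset F :
  {in F &, injective (@esrc _ _ H)} -> uacyclic (c @: F) = uacyclic F.
Proof.
move=> outdeg_le1; apply/forall_inP/forall_inP => acyclic e eF.
  apply: contra (acyclic _ (imset_f c eF)).
  by rewrite esrc_c etgt_c -imsetD1 //; exact: connect_imset.
case/imsetP: eF => {}e eF ->; rewrite esrc_c etgt_c -imsetD1 //.
apply/negP => /connect_imset_linked /orP[|/andP[]]; first exact/negP/acyclic.
case/exists_inP=> x xX srcx /exists_inP[y yX tgty].
have sink z : z \in X -> {in F, forall e', esrc e' != z}.
  by move=> zX e' _; apply: contraNneq (esrc_notin e') => ->.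
have subF := subD1set F e.
have xy : x = y.
  apply: connect_sinks_eq (sink x xX) (sink y yX) _ => //.
  apply: connect_trans (connect_uadj_subset subF tgty).
  rewrite connect_uadj_sym; apply: connect_trans (connect_uadj_subset subF srcx).
  by apply/connect1/uadjP; exists e => //; right.
move/negP: (acyclic e eF); apply; apply: connect_trans srcx _.
by rewrite connect_uadj_sym xy.
Qed.

Lemma is_inforest_imset F : is_inforest (c @: F) = is_inforest F.
Proof.
rewrite /is_inforest; apply/andP/andP => -[acyclic /outdeg_le1P outdeg_le1].
  have outdeg_le1F := (outdeg_le1_imset F).1 outdeg_le1.
  by rewrite -uacyclic_imset //; split=> //; apply/outdeg_le1P.
by rewrite uacyclic_imset //; split=> //; apply/outdeg_le1P/outdeg_le1_imset.
Qed.

End MergeSinks.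

Lemma forest_sum_bij (R : comPzRingType) (V W : finType) (H : mgraph V R)
    (H' : mgraph W R) (c : 'I_(ne H) -> 'I_(ne H')) (j : nat) :
  bijective c -> (forall e, elab (c e) = elab e) ->
  (forall F : {set 'I_(ne H)}, is_inforest (c @: F) = is_inforest F) ->
  forest_sum H' j = forest_sum H j.
Proof.
move=> [d cK dK] elab_c inforest_c; have c_inj := can_inj cK.
rewrite /forest_sum (reindex (fun F : {set 'I_(ne H)} => c @: F)) /=.
  apply: eq_big => [F|F _]; first by rewrite inforest_c card_imset.
  rewrite big_imset /=; last by move=> ? ? _ _ /c_inj.
  by apply: eq_bigr => e _; rewrite elab_c.
exists (fun F : {set 'I_(ne H')} => d @: F) => F _;
  by rewrite -imset_comp (eq_imset _ cK, eq_imset _ dK) imset_id.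
Qed.

Lemma forest_sum_kl_refl (R : comPzRingType) (V : finType) (H : mgraph V R) j x :
  forest_sum_kl H j x x = forest_sum H j.
Proof. by apply: eq_bigl => F; rewrite /same_comp connect0 andbT. Qed.

Lemma tnth_in_tuple_map (T U : Type) (f : T -> U) (s : seq T) (i : 'I_(size s)) :
  tnth (in_tuple (map f s)) (cast_ord (esym (size_map f s)) i) = f (tnth (in_tuple s) i).
Proof.
set x := tnth (in_tuple s) i.
by rewrite (tnth_nth (f x)) {2}/x (tnth_nth x) /= (nth_map x).
Qed.

Lemma forest_sum_merge_sinks (R : comPzRingType) (V W : finType) (s : seq (V * V * R))
    (g : V -> W) (X : {set V}) j :
  (forall u v, g u = g v -> u = v \/ (u \in X) && (v \in X)) ->
  (forall t, t \in s -> t.1.1 \notin X) ->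
  forest_sum (mgraph_of_seq [seq (g t.1.1, g t.1.2, t.2) | t <- s]) j
  = forest_sum (mgraph_of_seq s) j.
Proof.
move=> g_merges_X src_notin; set f := fun t : V * V * R => _.
have c_bij : bijective (cast_ord (esym (size_map f s))).
  by exists (cast_ord (size_map f s)) => i; apply: val_inj.
apply: (@forest_sum_bij _ _ _ (mgraph_of_seq s) (mgraph_of_seq (map f s)) _ j c_bij)
  => [e|F]; first by rewrite /= tnth_in_tuple_map.
apply: (is_inforest_imset (g := g) (X := X)) => // [|e|e|e].
- exact: bij_inj.
- by rewrite /= tnth_in_tuple_map.
- by rewrite /= tnth_in_tuple_map.
- exact/src_notin/mem_tnth.
Qed.

Lemma del1_merges n (u v : option 'I_n.+1) : del1 u = del1 v ->
  u = v \/ (u \in [set None; Some ord0]) && (v \in [set None; Some ord0]).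
Proof.
rewrite !inE; case: u v => [u|] [v|] //=;
  do ?[case: (unliftP ord0 u) => [u'|] ->]; do ?[case: (unliftP ord0 v) => [v'|] ->];
  rewrite /= ?unlift_none ?liftK //= ?eqxx ?orbT; try by right.
by case=> ->; left.
Qed.

Lemma Gstar1_edges_src_notin n (E : {set 'I_n.+1 * 'I_n.+1}) (Leak : {set 'I_n.+1})
    (R : comPzRingType) (a : option 'I_n.+1 -> 'I_n.+1 -> R) t :
  t \in Gstar1_edges E Leak a -> t.1.1 \notin [set None; Some ord0].
Proof.
rewrite mem_filter !inE negb_or => /andP[-> +]; rewrite andbT.
by rewrite mem_cat => /orP[] /mapP[? _ ->].
Qed.

Theorem lemma3p11 (R : comPzRingType) (n : nat) (E : {set 'I_n.+1 * 'I_n.+1})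
  (In Out Leak : {set 'I_n.+1}) (a : option 'I_n.+1 -> 'I_n.+1 -> R) :
  In = [set ord0] -> Out = [set ord0] ->
  forall j : nat, (0 < j)%N ->
    forest_sum_kl (Gtilde_star1 E Leak a) j (Some ord0) (Some ord0)
    = forest_sum (Gtilde1 E Leak a) j.
Proof.
move=> _ _ j _; rewrite forest_sum_kl_refl; symmetry.
exact: forest_sum_merge_sinks (@del1_merges n) (@Gstar1_edges_src_notin n E Leak R a).
Qed.
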